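(* Let $x_1,\dots,x_n,y_1,\dots,y_m$ be independent indeterminates over $\mathbb Z$, and let $\sigma_\ell(\mathbf x)$, $\sigma_j(\mathbf y)$ denote the elementary symmetric polynomials in the $x_i$, respectively the $y_j$. Then there exist $nm\times nm$ matrices $A$ and $B$, where every entry of $A$ is an integer polynomial in $\sigma_1(\mathbf x),\dots,\sigma_n(\mathbf x)$ and every entry of $B$ is an integer polynomial in $\sigma_1(\mathbf y),\dots,\sigma_m(\mathbf y)$, such that $$\prod_{i=1}^n\prod_{j=1}^m (t-x_iy_j)=\det(tI-AB).$$
   Context: The elementary symmetric polynomials $\sigma_\ell(x_1,\dots,x_n)$ are defined by $\prod_{k=1}^n(t+x_k)=\sum_{\ell=0}^n\sigma_\ell(x_1,\dots,x_n)t^{n-\ell}$. *)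

From HB Require Import structures.
From mathcomp Require Import all_boot all_order all_algebra.
From mathcomp Require Import mpoly.
Set Implicit Arguments. Unset Strict Implicit. Unset Printing Implicit Defensive.
Import GRing.Theory.
Local Open Scope ring_scope.

Definition elsym (R : comNzRingType) (k : nat) (xs : 'I_k -> R) (l : nat) : R :=
  (\prod_(i < k) ('X + (xs i)%:P))`_(k - l).

Definition xvar (n m : nat) (i : 'I_n) : {mpoly int[n + m]} := 'X_(lshift m i).
Definition yvar (n m : nat) (j : 'I_m) : {mpoly int[n + m]} := 'X_(rshift n j).

From HB Require Import structures.
From mathcomp Require Import all_boot all_order all_algebra.
From mathcomp Require Import mpoly.
From mathcomp Require Import fraction zify.
From mathcomp.real_closed Require Import mxtens.
Set Implicit Arguments. Unset Strict Implicit. Unset Printing Implicit Defensive.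
Import GRing.Theory.
Local Open Scope ring_scope.

(* If [a] and [b] list the roots of monic polynomials [p] and [q], the
   Vandermonde matrices of [a] and [b] diagonalise the companion matrices
   [C_p] and [C_q]; hence [C_p *t C_q] is similar to the diagonal matrix with
   entries [a_i * b_j], and its characteristic polynomial is
   [\prod_(i, j) ('X - a_i b_j)].  With [p = \prod_i ('X + x_i)] and
   [q = \prod_j ('X + y_j)] the roots are [-x_i] and [-y_j], and
   [C_p *t C_q = (C_p *t 1) *m (1 *t C_q)], where the entries of [C_p] are
   [0], [1] or [- sigma_l(x)], and those of [C_q] likewise in the [y_j]. *)

(* The companion matrix of [mxpoly], indexed by [n] rather than by
   [(size p).-1] so that no cast is needed. *)
Definition companion_mx (R : nzRingType) n (p : {poly R}) : 'M[R]_n :=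
  \matrix_(i, j) if i == n.-1 :> nat then - p`_j else (i.+1 == j :> nat)%:R.

Section CompanionVandermonde.
Variables (R : comNzRingType) (n : nat) (p : {poly R}).
Hypotheses (size_p : size p = n.+1) (monic_p : p \is monic).

Lemma companion_mx_root (a : R) (k : 'I_n) : root p a ->
  \sum_(j < n) companion_mx n p k j * a ^+ j = a ^+ k.+1.
Proof.
move=> /rootP pa0.
have lead_p : p`_n = 1 by move/monicP: monic_p; rewrite /lead_coef size_p.
have a_n : a ^+ n = - \sum_(j < n) p`_j * a ^+ j.
  apply/eqP; rewrite -addr_eq0 addrC; apply/eqP.
  by move: pa0; rewrite horner_coef size_p big_ord_recr /= lead_p mul1r.
have [k_last|k_not_last] := eqVneq (k : nat) n.-1.
  have -> : k.+1 = n by have := ltn_ord k; lia.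
  rewrite a_n -sumrN; apply: eq_bigr => j _.
  by rewrite mxE k_last eqxx mulNr.
have kS_lt_n : (k.+1 < n)%N by have := ltn_ord k; move/eqP: k_not_last; lia.
rewrite (bigD1 (Ordinal kS_lt_n)) //= mxE (negbTE k_not_last) eqxx mul1r.
rewrite big1 ?addr0 // => j /negbTE j_neq.
by rewrite mxE (negbTE k_not_last) -val_eqE /= eq_sym in j_neq *; rewrite j_neq mul0r.
Qed.

Lemma companion_mx_Vandermonde (a : 'rV[R]_n) : (forall k, root p (a 0 k)) ->
  companion_mx n p *m Vandermonde n a = Vandermonde n a *m diag_mx a.
Proof.
move=> pa; apply/matrixP => i k; rewrite mul_mx_diag !mxE.
rewrite mulrC -exprS -(companion_mx_root i (pa k)).
by apply: eq_bigr => j _; rewrite !mxE.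
Qed.

End CompanionVandermonde.

Lemma char_poly_similar (R : idomainType) n (M P D : 'M[R]_n) :
  M *m P = P *m D -> \det P != 0 -> char_poly M = char_poly D.
Proof.
move=> MP_PD detP.
have : char_poly_mx M *m map_mx polyC P = map_mx polyC P *m char_poly_mx D.
  by rewrite mulmxBl mulmxBr mul_scalar_mx mul_mx_scalar -!map_mxM MP_PD.
move/(congr1 determinant); rewrite !det_mulmx [RHS]mulrC.
by apply: mulIf; rewrite det_map_mx polyC_eq0.
Qed.

Lemma det_tensmx_neq0 (R : idomainType) m n (V : 'M[R]_m) (W : 'M[R]_n) :
  \det V != 0 -> \det W != 0 -> \det (V *t W) != 0.
Proof.
move=> detV detW.
have [m0 | m_gt0] := posnP m.
  by move: (V *t W); rewrite m0 => X; rewrite det_mx00 oner_eq0.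
have [n0 | n_gt0] := posnP n.
  by move: (V *t W); rewrite n0 muln0 => X; rewrite det_mx00 oner_eq0.
have unit_frac k (X : 'M[R]_k) : (map_mx (@tofrac R) X \in unitmx) = (\det X != 0).
  by rewrite unitmxE det_map_mx unitfE tofrac_eq0.
rewrite -unit_frac map_mxT.
by apply: tensmx_unit; rewrite ?unit_frac -?lt0n.
Qed.

Lemma tensmx_diag (R : comPzRingType) m n (u : 'rV[R]_m) (v : 'rV[R]_n) :
  diag_mx u *t diag_mx v =
  diag_mx (\row_k (u 0 (mxtens_unindex k).1 * v 0 (mxtens_unindex k).2)).
Proof.
apply/matrixP => k l; rewrite !mxE.
case: (mxtens_indexP k) => i j; case: (mxtens_indexP l) => i' j'.
rewrite !mxtens_indexK (inj_eq (can_inj (@mxtens_indexK m n))) xpair_eqE.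
by case: eqP => [->|_]; case: eqP => [->|_]; rewrite ?mulr1n ?mulr0n ?mul0r ?mulr0.
Qed.

Lemma char_poly_diag (R : comNzRingType) n (d : 'rV[R]_n) :
  char_poly (diag_mx d) = \prod_(i < n) ('X - (d 0 i)%:P).
Proof.
rewrite char_poly_trig ?diag_mx_is_trig //.
by apply: eq_bigr => i _; rewrite mxE eqxx mulr1n.
Qed.

Lemma companion_prod_XsubC_Vandermonde (R : comNzRingType) n (c : 'rV[R]_n) :
  companion_mx n (\prod_(i < n) ('X - (c 0 i)%:P)) *m Vandermonde n c
  = Vandermonde n c *m diag_mx c.
Proof.
apply: companion_mx_Vandermonde => [||i].
- by rewrite size_prod_XsubC [index_enum _]unlock -enumT size_enum_ord.
- exact: monic_prod_XsubC.
by apply/rootP; rewrite (bigD1 i) //= hornerM hornerXsubC subrr mul0r.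
Qed.

Lemma det_Vandermonde_neq0 (R : idomainType) n (c : 'I_n -> R) :
  injective c -> \det (Vandermonde n (\row_i c i)) != 0.
Proof.
move=> c_inj; rewrite det_Vandermonde.
apply/prodf_neq0 => i _; apply/prodf_neq0 => j ij.
by rewrite !mxE subr_eq0 (inj_eq c_inj) neq_ltn ij orbT.
Qed.

Lemma char_poly_tens_companion (R : idomainType) m n
    (a : 'I_m -> R) (b : 'I_n -> R) : injective a -> injective b ->
  char_poly (companion_mx m (\prod_(i < m) ('X - (a i)%:P)) *t
             companion_mx n (\prod_(j < n) ('X - (b j)%:P)))
  = \prod_(i < m) \prod_(j < n) ('X - (a i * b j)%:P).
Proof.
move=> a_inj b_inj.
have prod_row k (c : 'I_k -> R) :
    \prod_(i < k) ('X - (c i)%:P) = \prod_(i < k) ('X - ((\row_j c j) 0 i)%:P).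
  by apply: eq_bigr => i _; rewrite mxE.
rewrite (prod_row _ a) (prod_row _ b).
rewrite (char_poly_similar (D := diag_mx (\row_i a i) *t diag_mx (\row_j b j))
  _ (det_tensmx_neq0 (det_Vandermonde_neq0 a_inj) (det_Vandermonde_neq0 b_inj))).
  rewrite tensmx_diag char_poly_diag pair_big /=.
  rewrite (reindex (@mxtens_unindex m n)) /=; last first.
    by exists (@mxtens_index m n) => k _; rewrite (mxtens_indexK, mxtens_unindexK).
  by apply: eq_bigr => k _; rewrite !mxE.
by rewrite !tensmx_mul !companion_prod_XsubC_Vandermonde.
Qed.

Lemma companion_mx_elsym (S : comNzRingType) N (xs : 'I_N -> S) (i j : 'I_N) :
  exists p : {mpoly int[N]},
    companion_mx N (\prod_(k < N) ('X + (xs k)%:P)) i j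
    = mmap (fun c : int => c%:~R) (fun k => elsym xs k.+1) p.
Proof.
rewrite mxE; case: ifP => _; last first.
  by exists ((i.+1 == j :> nat)%:R); rewrite rmorph_nat.
have lt_N : (N - j.+1 < N)%N by have := ltn_ord j; lia.
exists (- 'X_(Ordinal lt_N)); rewrite rmorphN /= mmapX mmap1U /= /elsym.
by have -> : (N - (N - j.+1).+1)%N = j by have := ltn_ord j; lia.
Qed.

Section TensorImage.
Variables (R S : comNzRingType) (f : {rmorphism R -> S}).

Lemma tensmx_image m n p q (A : 'M[S]_(m, n)) (B : 'M[S]_(p, q)) :
  (forall i j, exists r, A i j = f r) -> (forall i j, exists r, B i j = f r) ->
  forall k l, exists r, (A *t B) k l = f r.
Proof.
move=> imA imB k l.
case: (mxtens_indexP k) => i j; case: (mxtens_indexP l) => i' j'.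
rewrite tensmxE; have [r ->] := imA i i'; have [s ->] := imB j j'.
by exists (r * s); rewrite rmorphM.
Qed.

Lemma scalar_mx1_image n (i j : 'I_n) : exists r, (1%:M : 'M[S]_n) i j = f r.
Proof. by exists (i == j)%:R; rewrite mxE rmorph_nat. Qed.

End TensorImage.

Lemma mpolyX_inj (R : nzRingType) n : injective (fun i : 'I_n => 'X_i : {mpoly R[n]}).
Proof.
move=> i j /(congr1 (fun p => p@_U_(i)%MM)) /=.
by rewrite !mcoeffXU eqxx; case: eqP => // _ /eqP; rewrite oner_eq0.
Qed.

Theorem mainTheorem5 (n m : nat) :
  exists (A B : 'M[{mpoly int[n + m]}]_(n * m)),
    (forall i j, exists p : {mpoly int[n]},
        A i j = mmap (fun c : int => c%:~R) (fun k : 'I_n => elsym (@xvar n m) k.+1) p) /\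
    (forall i j, exists q : {mpoly int[m]},
        B i j = mmap (fun c : int => c%:~R) (fun k : 'I_m => elsym (@yvar n m) k.+1) q) /\
    \prod_(i < n) \prod_(j < m) ('X - (@xvar n m i * @yvar n m j)%:P)
      = \det ('X%:M - map_mx polyC (A *m B)).
Proof.
pose Cx := companion_mx n (\prod_(i < n) ('X + (xvar m i)%:P)).
pose Cy := companion_mx m (\prod_(j < m) ('X + (yvar n j)%:P)).
exists (Cx *t 1%:M), (1%:M *t Cy); split; [|split].
- apply: tensmx_image => [i j|]; first exact: companion_mx_elsym.
  exact: scalar_mx1_image.
- apply: tensmx_image => [|i j]; first exact: scalar_mx1_image.
  exact: companion_mx_elsym.
have negX_inj k (v : 'I_k -> 'I_(n + m)) : injective v ->
    injective (fun i => - 'X_(v i) : {mpoly int[n + m]}).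
  by move=> v_inj i j /oppr_inj /mpolyX_inj /v_inj.
have prod_XaddC k (c : 'I_k -> {mpoly int[n + m]}) :
    \prod_(i < k) ('X + (c i)%:P) = \prod_(i < k) ('X - (- c i)%:P).
  by apply: eq_bigr => i _; rewrite polyCN opprK.
rewrite tensmx_mul mulmx1 mul1mx -/(char_poly_mx _) -/(char_poly _).
rewrite /Cx /Cy (prod_XaddC _ (@xvar n m)) (prod_XaddC _ (@yvar n m)).
rewrite (char_poly_tens_companion (negX_inj _ _ (@lshift_inj n m))
                                  (negX_inj _ _ (@rshift_inj n m))).
by apply: eq_bigr => i _; apply: eq_bigr => j _; rewrite mulrNN.
Qed.
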